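(* Let $a$ and $b$ be relatively prime integers with $1<a<b$, let $(u,v)$ be the definitely least solution of $ax+by=1$, let $S=\langle a,b\rangle$ and $h=\min I(S)$. Let $L(S)$ be the $|v|\times|u|$ matrix with $(i,j)$-entry $L(S)(i,j)=h+(i-1)b+(j-1)a$. Then for all $1\le i\le |v|$ and $1\le j\le |u|$, $L(S)(i,j)=F(S)-(|u|-j)a-(|v|-i)b$.
   Context: $\langle a,b\rangle=\{\lambda_1a+\lambda_2b:\lambda_1,\lambda_2\in\mathbb{N}\}$. $F(S)$ is the Frobenius number of $S$, the largest integer not in $S$. $I(S)$ is the set of isolated gaps of $S$ ($x\in\mathbb{N}\setminus S$ with $x-1,x+1\in S$). The definitely least solution $(u,v)$ of $ax+by=1$ is the unique integer solution with $|u|,|v|$ minimal; equivalently the one with $|u|\le b/2$, $|v|\le a/2$. *)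

From mathcomp Require Import all_boot all_order all_algebra.
Set Implicit Arguments. Unset Strict Implicit. Unset Printing Implicit Defensive.
Import Order.TTheory GRing.Theory Num.Theory.
Local Open Scope ring_scope.

Definition in_semigroup2 (a b n : nat) : Prop :=
  exists l1 l2 : nat, n = (l1 * a + l2 * b)%N.

Definition is_frobenius (S : nat -> Prop) (F : int) : Prop :=
  (exists n : nat, F = n%:Z /\ ~ S n) /\
  (forall n : nat, F < n%:Z -> S n).

Definition isolated_gap (S : nat -> Prop) (x : nat) : Prop :=
  (0 < x)%N /\ ~ S x /\ S x.-1 /\ S x.+1.

Definition is_min_isolated_gap (S : nat -> Prop) (h : nat) : Prop :=
  isolated_gap S h /\ (forall x, isolated_gap S x -> (h <= x)%N).

(* (u,v) is the definitely least solution of a x + b y = 1: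
   the integer solution with |u| <= b/2 and |v| <= a/2. *)
Definition definitely_least (a b : nat) (u v : int) : Prop :=
  (a%:Z * u + b%:Z * v = 1) /\ (2 * `|u|%N <= b)%N /\ (2 * `|v|%N <= a)%N.

Definition Lmat (a b h : nat) (i j : nat) : nat :=
  (h + (i - 1) * b + (j - 1) * a)%N.

From mathcomp Require Import all_boot all_order all_algebra.
From mathcomp Require Import zify ring.
Import Order.TTheory GRing.Theory Num.Theory.
Set Implicit Arguments. Unset Strict Implicit. Unset Printing Implicit Defensive.
Local Open Scope ring_scope.

(* Bezout and the fact that [ab] is not a positive combination of [a] and [b]
   show that the integers outside <a,b> are exactly the [ab - pa - qb] with
   [p, q >= 1]; in particular F = ab - a - b.  With U = |u| and V = |v| one has
   aU - bV = ±1, and g = ab - aU - bV is an isolated gap because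
   g - (aU - bV) = (b - 2U)a and g + (aU - bV) = (a - 2V)b lie in S.
   Conversely, if x = ab - pa - qb is an isolated gap, then x ± (aU - bV) lie
   in S, which forces p <= U and q <= V, i.e. x >= g.  So h = g, and
   L(i,j) = g + (i-1)b + (j-1)a = F - (U-j)a - (V-i)b. *)

Lemma frobenius_uniq (S : nat -> Prop) (F F' : int) :
  is_frobenius S F -> is_frobenius S F' -> F = F'.
Proof.
move=> [[n [-> nSn]] Sgt] [[n' [-> nSn']] Sgt'].
by case: (ltrgtP n%:Z n'%:Z) => // [/Sgt | /Sgt'].
Qed.

Lemma and_pm1 (P : int -> Prop) (e x : int) : e = 1 \/ e = -1 ->
  (P (x - e) /\ P (x + e)) <-> (P (x - 1) /\ P (x + 1)).
Proof. by case=> ->; rewrite ?opprK //; split=> -[]. Qed.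

Lemma pos_comb_neq_mul (a b : nat) (P Q : int) : coprime a b -> 0 < P -> 0 < Q ->
  P * a%:Z + Q * b%:Z != a%:Z * b%:Z.
Proof.
move=> cop P_gt0 Q_gt0; apply/eqP => comb.
have [b0 | b_gt0] := posnP b.
  by move: cop comb; rewrite b0 /coprime gcdn0 => /eqP->; lia.
have : (b%:Z %| P * a%:Z)%Z by apply/dvdzP; exists (a%:Z - Q); lia.
rewrite Gauss_dvdzl ?coprimezE ?absz_nat 1?coprime_sym // => /dvdzP[k Pk].
have k_ge1 : 1 <= k by nia.
have : 0 <= (k - 1) * (b%:Z * a%:Z) by apply: mulr_ge0; lia.
have : 0 < Q * b%:Z by apply: mulr_gt0; lia.
rewrite Pk in comb; lia.
Qed.

Lemma bezout_abs (a b : nat) (u v : int) : (1 < a)%N -> (1 < b)%N ->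
  a%:Z * u + b%:Z * v = 1 ->
  [/\ (0 < `|u|)%N, (0 < `|v|)%N &
      a%:Z * `|u|%N%:Z - b%:Z * `|v|%N%:Z = 1 \/ a%:Z * `|u|%N%:Z - b%:Z * `|v|%N%:Z = -1].
Proof.
move=> a_gt1 b_gt1 bez.
have [u_gt0|u_le0] := ltrP 0 u; have [v_gt0|v_le0] := ltrP 0 v.
- nia.
- have [v0|v_lt0] := eqVneq v 0; first by move: bez; rewrite v0; nia.
  split; [lia | lia | left; lia].
- have [u0|u_lt0] := eqVneq u 0; first by move: bez; rewrite u0; nia.
  split; [lia | lia | right; lia].
- nia.
Qed.

Section TwoGeneratorSemigroup.

Variables a b : nat.
Hypotheses (coprime_ab : coprime a b) (a_gt0 : (0 < a)%N).

Definition in_semigroup2z (n : int) : Prop :=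
  exists l1 l2 : nat, n = l1%:Z * a%:Z + l2%:Z * b%:Z.

Lemma in_semigroup2zE (n : nat) : in_semigroup2 a b n <-> in_semigroup2z n.
Proof. by split=> -[l1 [l2 En]]; exists l1, l2; lia. Qed.

Lemma in_semigroup2z_ge0 (n : int) : in_semigroup2z n -> 0 <= n.
Proof. by move=> [l1 [l2 ->]]; lia. Qed.

Lemma gap_notin_semigroup2z (p q n : int) : 0 < p -> 0 < q ->
  n = a%:Z * b%:Z - p * a%:Z - q * b%:Z -> ~ in_semigroup2z n.
Proof.
move=> p_gt0 q_gt0 -> [l1 [l2 En]].
have := pos_comb_neq_mul (P := l1%:Z + p) (Q := l2%:Z + q) coprime_ab; lia.
Qed.

Lemma shift_to_multiple (n : int) :
  exists2 q : nat, (0 < q <= a)%N & exists m : int, n + q%:Z * b%:Z = m * a%:Z.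
Proof.
(* [q - 1] is [-n y - 1] reduced modulo [a], and [y b = 1] modulo [a]. *)
have /coprimezP[[x y] /= bez] : coprimez a b by rewrite coprimezE !absz_nat.
have a_neq0 : a%:Z != 0 by lia.
have r_ge0 := modz_ge0 (- (n * y) - 1) a_neq0.
have r_lt := ltz_pmod (- (n * y) - 1) (ltac:(lia) : 0 < a%:Z).
have := divz_eq (- (n * y) - 1) a%:Z.
set r := ((- (n * y) - 1) %% a%:Z)%Z in r_ge0 r_lt *.
set k := ((- (n * y) - 1) %/ a%:Z)%Z => divr.
exists (absz r).+1; first by lia.
exists (n * x - k * b%:Z).
have -> : ((absz r).+1)%:Z = - (n * y) - k * a%:Z by lia.
by rewrite -[X in X + _ = _]mulr1 -bez; ring.
Qed.

Lemma semigroup2z_or_gap (n : int) : in_semigroup2z n \/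
  exists p q : int, [/\ 0 < p, 0 < q & n = a%:Z * b%:Z - p * a%:Z - q * b%:Z].
Proof.
have [q q_range [m shift]] := shift_to_multiple n.
have [b_le_m | m_lt_b] := lerP b%:Z m.
- left; exists (absz (m - b%:Z)), (a - q)%N.
  have -> : (absz (m - b%:Z))%:Z = m - b%:Z by lia.
  have -> : (a - q)%N%:Z = a%:Z - q%:Z by lia.
  by rewrite -[n](addrK (q%:Z * b%:Z)) shift; ring.
- right; exists (b%:Z - m), q%:Z; split; [lia | lia |].
  by rewrite -[n](addrK (q%:Z * b%:Z)) shift; ring.
Qed.

Lemma is_frobenius_semigroup2 : (1 < a)%N -> (1 < b)%N ->
  is_frobenius (in_semigroup2 a b) (a%:Z * b%:Z - a%:Z - b%:Z).
Proof.
move=> a_gt1 b_gt1; split.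
- exists (a * b - (a + b))%N; split; first by nia.
  rewrite in_semigroup2zE.
  by apply: (gap_notin_semigroup2z (p := 1) (q := 1)) => //; nia.
- move=> n lt_n; apply/in_semigroup2zE.
  have [//|[p [q [p_gt0 q_gt0 En]]]] := semigroup2z_or_gap n.
  nia.
Qed.

Lemma isolated_gapE (x : nat) : isolated_gap (in_semigroup2 a b) x <->
  [/\ (0 < x)%N, ~ in_semigroup2z x, in_semigroup2z (x%:Z - 1) & in_semigroup2z (x%:Z + 1)].
Proof.
rewrite /isolated_gap !in_semigroup2zE intS addrC.
split=> [[x_gt0 [nSx [Sx1 Sx2]]] | [x_gt0 nSx Sx1 Sx2]].
- by rewrite predn_int // in Sx1; split.
- by rewrite predn_int.
Qed.

Variables U V : nat.
Hypotheses (U_gt0 : (0 < U)%N) (V_gt0 : (0 < V)%N).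
Hypotheses (U_le_half_b : (2 * U <= b)%N) (V_le_half_a : (2 * V <= a)%N).
Let e : int := a%:Z * U%:Z - b%:Z * V%:Z.
Hypothesis e_unit : e = 1 \/ e = -1.

Lemma isolated_gap_coeffs_le (p q x : int) : 0 < p -> 0 < q ->
  x = a%:Z * b%:Z - p * a%:Z - q * b%:Z ->
  in_semigroup2z (x - e) -> in_semigroup2z (x + e) -> p <= U%:Z /\ q <= V%:Z.
Proof.
move=> p_gt0 q_gt0 Ex Sxm Sxp.
split; [have [//|lt_Up] := lerP p U%:Z | have [//|lt_Vq] := lerP q V%:Z]; exfalso.
- by apply: (gap_notin_semigroup2z (p := p - U%:Z) (q := q + V%:Z) _ _ _ Sxp); rewrite /e; lia.
- by apply: (gap_notin_semigroup2z (p := p + U%:Z) (q := q - V%:Z) _ _ _ Sxm); rewrite /e; lia.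
Qed.

Lemma abUV_isolated_gap (g : int) : g = a%:Z * b%:Z - a%:Z * U%:Z - b%:Z * V%:Z ->
  [/\ 0 < g, ~ in_semigroup2z g, in_semigroup2z (g - 1) & in_semigroup2z (g + 1)].
Proof.
move=> Eg.
have nSg : ~ in_semigroup2z g by apply: (gap_notin_semigroup2z (p := U%:Z) (q := V%:Z)); lia.
have Sgm : in_semigroup2z (g - e).
  by exists (b - 2 * U)%N, 0%N; rewrite -subzn // PoszM Eg /e; lia.
have Sgp : in_semigroup2z (g + e).
  by exists 0%N, (a - 2 * V)%N; rewrite -subzn // PoszM Eg /e; lia.
have [Sg1 Sg2] := (and_pm1 in_semigroup2z g e_unit).1 (conj Sgm Sgp).
by split=> //; have := in_semigroup2z_ge0 Sg1; lia.
Qed.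

Lemma min_isolated_gap_semigroup2 (h : nat) : is_min_isolated_gap (in_semigroup2 a b) h ->
  h%:Z = a%:Z * b%:Z - a%:Z * U%:Z - b%:Z * V%:Z.
Proof.
move=> [/isolated_gapE[_ nSh Sh1 Sh2] h_min].
set g := a%:Z * b%:Z - a%:Z * U%:Z - b%:Z * V%:Z.
have [g_gt0 nSg Sg1 Sg2] := abUV_isolated_gap (erefl g).
have le_hg : (h <= absz g)%N.
  by apply/h_min/isolated_gapE; rewrite gtz0_abs //; split; rewrite // absz_gt0 gt_eqF.
have [//|[p [q [p_gt0 q_gt0 Eh]]]] := semigroup2z_or_gap h.
have [She1 She2] := (and_pm1 in_semigroup2z h%:Z e_unit).2 (conj Sh1 Sh2).
have [le_pU le_qV] := isolated_gap_coeffs_le p_gt0 q_gt0 Eh She1 She2.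
have : p * a%:Z <= U%:Z * a%:Z by apply: ler_wpM2r.
have : q * b%:Z <= V%:Z * b%:Z by apply: ler_wpM2r.
lia.
Qed.

End TwoGeneratorSemigroup.

Theorem corollary4p12 (a b : nat) (u v : int) (h : nat) (F : int) :
  coprime a b -> (1 < a)%N -> (a < b)%N ->
  definitely_least a b u v ->
  is_min_isolated_gap (in_semigroup2 a b) h ->
  is_frobenius (in_semigroup2 a b) F ->
  forall i j : nat, (1 <= i <= `|v|)%N -> (1 <= j <= `|u|)%N ->
    (Lmat a b h i j)%:Z
      = F - ((`|u|%N - j)%N * a)%:Z - ((`|v|%N - i)%N * b)%:Z.
Proof.
move=> coprime_ab a_gt1 lt_ab [bez [u_le v_le]] h_min F_frob i j i_range j_range.
have b_gt1 : (1 < b)%N by apply: ltn_trans lt_ab.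
have [u_gt0 v_gt0 e_unit] := bezout_abs a_gt1 b_gt1 bez.
have a_gt0 := ltnW a_gt1.
have -> := frobenius_uniq F_frob (is_frobenius_semigroup2 coprime_ab a_gt0 a_gt1 b_gt1).
have := min_isolated_gap_semigroup2 coprime_ab a_gt0 u_gt0 v_gt0 u_le v_le e_unit h_min.
by rewrite /Lmat !PoszD !PoszM -!subzn //; lia.
Qed.
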